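(* Let $n\ge 2$ be even and let $\pi=(\pi_1,\ldots,\pi_n)$ be a permutation of $\{1,\ldots,n\}$. Let $\Delta(\pi)=\sum_{i=1}^{n-1}|\pi_{i+1}-\pi_i|$ and $\Delta^*_n=\max\{\Delta(\sigma):\sigma \text{ a permutation of }\{1,\ldots,n\}\}$. Then $\Delta(\pi)=\Delta^*_n$ if and only if $\pi$ is mid-alternating and $\{\pi_1,\pi_n\}=\{\frac n2,\frac n2+1\}$. Moreover, $\Delta^*_n=(n^2-2)/2$.
   Context: For $n=2k$ even, a permutation $\pi$ of $\{1,\ldots,n\}$ is mid-alternating if for every $i<n$ either ($\pi_i\le k$ and $\pi_{i+1}\ge k+1$) or ($\pi_i\ge k+1$ and $\pi_{i+1}\le k$). *)

From mathcomp Require Import all_boot fingroup perm.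
Set Implicit Arguments. Unset Strict Implicit. Unset Printing Implicit Defensive.

(* A permutation pi of {1..n} is represented as s : {perm 'I_n};
   position i (1-based i+1) holds the value pi_(i+1) = val (s i) + 1. *)
Definition pival n (s : {perm 'I_n}) (i : nat) : nat :=
  match @insub nat (fun m => m < n) _ i with Some j => (val (s j)).+1 | None => 0 end.

Definition distn (a b : nat) : nat := (a - b) + (b - a).

Definition Delta n (s : {perm 'I_n}) : nat :=
  \sum_(0 <= i < n.-1) distn (pival s i.+1) (pival s i).

Definition Deltastar n : nat := \max_(s : {perm 'I_n}) Delta s.

Definition mid_alternating k (s : {perm 'I_(k.*2)}) : Prop :=
  forall i, i.+1 < k.*2 ->
    (pival s i <= k /\ k.+1 <= pival s i.+1) \/
    (k.+1 <= pival s i /\ pival s i.+1 <= k).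

From mathcomp Require Import all_boot perm zify.
Set Implicit Arguments. Unset Strict Implicit. Unset Printing Implicit Defensive.

(* Layer-cake decomposition: |a - b| counts the thresholds t < n lying in
   [min a b, max a b), so Delta is the sum over t of the number c(t) of adjacent
   positions split by the test "value <= t".  Exactly t values pass the test,
   and each of them is next to at most two split pairs, or one if it sits at an
   end; hence c(t) + #(ends <= t) <= 2t, and symmetrically
   c(t) + #(ends > t) <= 2(n - t).  With c(k) <= n - 1 at the middle threshold
   these add up to Delta + 1 <= 2k^2 for n = 2k.  Equality forces every bound to
   be tight: at t = k this is mid-alternation, at t = k - 1 and t = k + 1 it
   puts both ends in {k, k+1}.  A zigzag permutation attains the bound. *)

Lemma distn_sum_thresholds N a b : a <= N -> b <= N ->
  distn a b = \sum_(0 <= t < N) ((a <= t) != (b <= t) : nat).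
Proof.
suff sum_min : \sum_(0 <= t < N) ((a <= t) != (b <= t) : nat)
             = distn (minn a N) (minn b N) by rewrite sum_min /distn; lia.
rewrite /distn; elim: N => [|N IHN]; first by rewrite big_nil; lia.
by rewrite big_nat_recr //= IHN; case: (leqP a N); case: (leqP b N) => /=; lia.
Qed.

Lemma sum_min_thresholds k :
  \sum_(0 <= t < k.*2) (minn t (k.*2 - t)).*2 = (k ^ 2).*2.
Proof.
elim: k => [|k IHk]; first by rewrite big_nil.
rewrite doubleS big_nat_recl // big_nat_recr //=.
rewrite (eq_big_nat _ _ (F2 := fun t => (minn t (k.*2 - t)).*2 + 2)); last first.
  by move=> t /andP[_ t_lt]; lia.
rewrite big_split /= sum_nat_const_nat IHk; lia.
Qed.

Definition switches (b : nat -> bool) m := \sum_(0 <= i < m) (b i != b i.+1 : nat).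

Lemma switches_negb (b : nat -> bool) m :
  switches (fun i => ~~ b i) m = switches b m.
Proof. by apply: eq_bigr => i _; case: (b i); case: (b i.+1). Qed.

Section Switches.
Variable b : nat -> bool.

Lemma switches_leqif m :
  switches b m <= m ?= iff [forall i : 'I_m, b i != b i.+1].
Proof.
rewrite /switches big_mkord -[X in _ <= X ?= iff _]card_ord -sum1_card.
by apply: leqif_sum => i _; case: (b i != b i.+1).
Qed.

Lemma switches_ends_leqif m :
  switches b m + b 0 + b m <= (\sum_(0 <= i < m.+1) b i).*2
    ?= iff [forall i : 'I_m, ~~ (b i && b i.+1)].
Proof.
have sum_pairs : (\sum_(0 <= i < m.+1) b i).*2
               = \sum_(0 <= i < m) ((b i : nat) + b i.+1) + b 0 + b m.
  rewrite big_split /= -addnn {1}big_nat_recl // big_nat_recr //=; lia.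
rewrite sum_pairs; set C := [forall _, _]; rewrite -(andbT C) -(andbT (C && true)).
apply: leqif_add; last exact/leqif_refl.
apply: leqif_add; last exact/leqif_refl.
rewrite /switches !big_mkord.
by apply: leqif_sum => i _; case: (b i); case: (b i.+1).
Qed.

End Switches.

Section PermutationValues.
Variables (n : nat) (s : {perm 'I_n}).

Lemma pivalE (i : 'I_n) : pival s i = (s i).+1.
Proof. by rewrite /pival valK. Qed.

Lemma pival_le i : pival s i <= n.
Proof. by rewrite /pival; case: insubP => [j _ _|_] //=; apply: ltn_ord. Qed.

Lemma pival_inj i j : i < n -> j < n -> pival s i = pival s j -> i = j.
Proof.
move=> lt_i_n lt_j_n; rewrite (pivalE (Ordinal lt_i_n)) (pivalE (Ordinal lt_j_n)).
by move=> [/val_inj/perm_inj []].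
Qed.

Lemma sum_pival_le t : t <= n -> \sum_(0 <= i < n) (pival s i <= t : nat) = t.
Proof.
move=> le_t_n; rewrite big_mkord (eq_bigr (fun i => (s i < t : nat))); last first.
  by move=> i _; rewrite pivalE.
rewrite (reindex_perm s^-1); under eq_bigr do rewrite permKV.
rewrite -(big_mkord xpredT (fun i => (i < t : nat))).
have sum_lt m : \sum_(0 <= i < m) (i < t : nat) = minn t m.
  elim: m => [|m IHm]; first by rewrite big_nil; lia.
  by rewrite big_nat_recr //= IHm; case: (ltnP m t) => /=; lia.
by rewrite sum_lt; lia.
Qed.

Definition crossings t := switches (fun i => pival s i <= t) n.-1.

Lemma Delta_sum_crossings : Delta s = \sum_(0 <= t < n) crossings t.
Proof.
rewrite /Delta /crossings /switches exchange_big_nat /=.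
apply: eq_bigr => i _; rewrite (@distn_sum_thresholds n) ?pival_le //.
by apply: eq_bigr => t _; rewrite eq_sym.
Qed.

Hypothesis n_gt0 : 0 < n.

Lemma crossings_low_leqif t : t <= n ->
  crossings t + (pival s 0 <= t) + (pival s n.-1 <= t) <= t.*2
    ?= iff [forall i : 'I_n.-1, ~~ ((pival s i <= t) && (pival s i.+1 <= t))].
Proof.
by move=> le_t_n; have := switches_ends_leqif (fun i => pival s i <= t) n.-1;
  rewrite prednK // sum_pival_le.
Qed.

Lemma crossings_high_leqif t : t <= n ->
  crossings t + (t < pival s 0) + (t < pival s n.-1) <= (n - t).*2
    ?= iff [forall i : 'I_n.-1, ~~ ((t < pival s i) && (t < pival s i.+1))].
Proof.
move=> le_t_n; have := switches_ends_leqif (fun i => t < pival s i) n.-1.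
have sum_high : \sum_(0 <= i < n) (t < pival s i : nat) = n - t.
  have sum_split : \sum_(0 <= i < n) (t < pival s i : nat)
                 + \sum_(0 <= i < n) (pival s i <= t : nat) = n.
    rewrite -big_split (eq_bigr (fun=> 1)) ?sum_nat_const_nat; first lia.
    by move=> i _; rewrite ltnNge; case: leqP.
  by move: sum_split; rewrite sum_pival_le //; lia.
rewrite prednK // sum_high.
have -> // : switches (fun i => t < pival s i) n.-1 = crossings t.
by rewrite -switches_negb; apply: eq_bigr => i _; rewrite -!ltnNge.
Qed.

End PermutationValues.

Definition mid_endpoints k (s : {perm 'I_(k.*2)}) : Prop :=
  (pival s 0 = k /\ pival s (k.*2).-1 = k.+1) \/
  (pival s 0 = k.+1 /\ pival s (k.*2).-1 = k).

Section ExtremalPermutations.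
Variables (k : nat) (s : {perm 'I_(k.*2)}).
Hypothesis k_gt0 : 0 < k.

Let n_gt0 : 0 < k.*2. Proof. by rewrite double_gt0. Qed.

Lemma crossings_add_le t : t < k.*2 ->
  crossings s t + (t == k) <= (minn t (k.*2 - t)).*2.
Proof.
move=> lt_t_n; case: (ltngtP t k) => [lt_t_k|lt_k_t|->].
- by have [le_low _] := crossings_low_leqif s n_gt0 (ltnW lt_t_n); lia.
- by have [le_high _] := crossings_high_leqif s n_gt0 (ltnW lt_t_n); lia.
- have [le_all _] := switches_leqif (fun i => pival s i <= k) (k.*2).-1.
  by rewrite /crossings; lia.
Qed.

Lemma Delta_add1_leqif :
  Delta s + 1 <= (k ^ 2).*2 ?= iff
    [forall t : 'I_(k.*2), crossings s t + (t == k :> nat) == (minn t (k.*2 - t)).*2].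
Proof.
have sum_eq_k : \sum_(t < k.*2) ((t == k :> nat) : nat) = 1.
  have lt_k_n : k < k.*2 by lia.
  rewrite (bigD1 (Ordinal lt_k_n)) //= eqxx big1 // => t.
  by rewrite -val_eqE /= => /negbTE ->.
rewrite Delta_sum_crossings -sum_min_thresholds !big_mkord.
have -> : \sum_(t < k.*2) crossings s t + 1
        = \sum_(t < k.*2) (crossings s t + (t == k :> nat)) by rewrite big_split sum_eq_k.
by apply: leqif_sum => t _; apply/leqif_eq/crossings_add_le.
Qed.

Lemma mid_alternatingE : mid_alternating s <-> crossings s k = (k.*2).-1.
Proof.
have [_ eq_all] := switches_leqif (fun i => pival s i <= k) (k.*2).-1.
rewrite /crossings; split=> [mid | /eqP].
- apply/eqP; rewrite eq_all; apply/forallP => i.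
  have lt_i1_n : i.+1 < k.*2 by have := ltn_ord i; lia.
  have := mid i lt_i1_n.
  by case: (leqP (pival s i) k); case: (leqP (pival s i.+1) k); lia.
- rewrite eq_all => /forallP all_switch i lt_i1_n.
  have lt_i_n1 : i < (k.*2).-1 by lia.
  have /= := all_switch (Ordinal lt_i_n1).
  by case: (leqP (pival s i) k); case: (leqP (pival s i.+1) k); lia.
Qed.

Lemma crossings_tight_of_mid_alternating :
  mid_alternating s -> mid_endpoints s ->
  forall t, t < k.*2 -> crossings s t + (t == k) = (minn t (k.*2 - t)).*2.
Proof.
move=> mid ends t lt_t_n.
have ends_mid : k <= pival s 0 <= k.+1 /\ k <= pival s (k.*2).-1 <= k.+1.
  by case: ends; lia.
case: (ltngtP t k) => [lt_t_k|lt_k_t|->].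
- have [_ eq_low] := crossings_low_leqif s n_gt0 (ltnW lt_t_n).
  have : [forall i : 'I_(k.*2).-1, ~~ ((pival s i <= t) && (pival s i.+1 <= t))].
    apply/forallP => i; apply/negP => /andP[lo lo1].
    have := mid i; have := ltn_ord i; lia.
  by rewrite -eq_low => /eqP; lia.
- have [_ eq_high] := crossings_high_leqif s n_gt0 (ltnW lt_t_n).
  have : [forall i : 'I_(k.*2).-1, ~~ ((t < pival s i) && (t < pival s i.+1))].
    apply/forallP => i; apply/negP => /andP[hi hi1].
    have := mid i; have := ltn_ord i; lia.
  by rewrite -eq_high => /eqP; lia.
- by move/mid_alternatingE: mid; lia.
Qed.

Lemma mid_alternating_of_crossings_tight :
  (forall t, t < k.*2 -> crossings s t + (t == k) = (minn t (k.*2 - t)).*2) ->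
  mid_alternating s /\ mid_endpoints s.
Proof.
move=> tight; split.
  by apply/mid_alternatingE; have := tight k; rewrite eqxx; lia.
have ends_ge : k <= pival s 0 /\ k <= pival s (k.*2).-1.
  have le_k1_n : k.-1 <= k.*2 by lia.
  have [le_low _] := crossings_low_leqif s n_gt0 le_k1_n.
  by have := tight k.-1; lia.
have ends_le : pival s 0 <= k.+1 /\ pival s (k.*2).-1 <= k.+1.
  case: (ltnP k.+1 (k.*2)) => [lt_k1_n | le_n_k1].
    have [le_high _] := crossings_high_leqif s n_gt0 (ltnW lt_k1_n).
    by have := tight k.+1; lia.
  by have := pival_le s 0; have := pival_le s (k.*2).-1; lia.
have ends_neq : pival s 0 <> pival s (k.*2).-1.
  by move/(pival_inj n_gt0); lia.
rewrite /mid_endpoints; lia.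
Qed.

Lemma Delta_add1_eq_iff :
  Delta s + 1 = (k ^ 2).*2 <-> mid_alternating s /\ mid_endpoints s.
Proof.
have [_ eq_tight] := Delta_add1_leqif.
split=> [/eqP | [mid ends]].
- rewrite eq_tight => /forallP tight.
  apply: mid_alternating_of_crossings_tight => t lt_t_n.
  exact/eqP/(tight (Ordinal lt_t_n)).
- apply/eqP; rewrite eq_tight; apply/forallP => t.
  by apply/eqP/crossings_tight_of_mid_alternating.
Qed.

End ExtremalPermutations.

Section Zigzag.
Variable k : nat.

(* 0-based values of k, 2k, k-1, 2k-1, ..., 1, k+1. *)
Definition zigzag_val i := if odd i then (k.*2).-1 - i./2 else k.-1 - i./2.

Lemma zigzag_val_lt (i : 'I_(k.*2)) : zigzag_val i < k.*2.
Proof. by have := ltn_ord i; rewrite /zigzag_val; case: odd; lia. Qed.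

Lemma zigzag_inj : injective (fun i => Ordinal (zigzag_val_lt i)).
Proof.
move=> i j /(congr1 val) /=; rewrite /zigzag_val => eq_ij; apply: val_inj.
have := ltn_ord i; have := ltn_ord j.
have := odd_double_half i; have := odd_double_half j.
by move: eq_ij; case: (odd i); case: (odd j) => /=; lia.
Qed.

Definition zigzag : {perm 'I_(k.*2)} := perm zigzag_inj.

Lemma pival_zigzag i : i < k.*2 -> pival zigzag i = (zigzag_val i).+1.
Proof. by move=> lt_i_n; rewrite (pivalE zigzag (Ordinal lt_i_n)) permE. Qed.

Lemma zigzag_mid_alternating : mid_alternating zigzag.
Proof.
move=> i lt_i1_n; rewrite !pival_zigzag ?(ltnW lt_i1_n) // /zigzag_val /=.
have := odd_double_half i; have := odd_double_half i.+1 => /=.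
by case: (odd i) => /=; lia.
Qed.

Lemma zigzag_mid_endpoints : 0 < k -> mid_endpoints zigzag.
Proof.
move=> k_gt0; left; rewrite !pival_zigzag ?double_gt0 /zigzag_val /=; try lia.
have := odd_double_half (k.*2).-1.
by case: (odd (k.*2).-1) => /=; lia.
Qed.

End Zigzag.

Lemma Deltastar_double k : 0 < k -> Deltastar (k.*2) = (k ^ 2).*2 - 1.
Proof.
move=> k_gt0; apply/eqP; rewrite eqn_leq; apply/andP; split.
  by apply/bigmax_leqP => s _; have [le_Delta _] := Delta_add1_leqif s k_gt0; lia.
have [_ zigzag_max] := Delta_add1_eq_iff (zigzag k) k_gt0.
have := zigzag_max (conj (@zigzag_mid_alternating k) (zigzag_mid_endpoints k_gt0)).
by move=> Delta_zigzag; apply: leq_trans (leq_bigmax (zigzag k)); lia.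
Qed.

Theorem theorem3p3 (k : nat) (hk : 0 < k) (s : {perm 'I_(k.*2)}) :
  (Delta s = Deltastar (k.*2) <->
     (mid_alternating s /\
      ((pival s 0 = k /\ pival s (k.*2).-1 = k.+1) \/
       (pival s 0 = k.+1 /\ pival s (k.*2).-1 = k)))) /\
  Deltastar (k.*2) = ((k.*2) ^ 2 - 2) %/ 2.
Proof.
rewrite Deltastar_double //; split; last first.
  have -> : (k.*2) ^ 2 - 2 = ((k ^ 2).*2 - 1) * 2 by rewrite !expnS expn0; lia.
  by rewrite mulnK.
have [le_Delta _] := Delta_add1_leqif s hk.
apply: iff_trans (Delta_add1_eq_iff s hk); lia.
Qed.
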